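(* Let $t$ be a well-formed tree over $\tilde A_{i,k}$, $\Sigma$ a winning strategy of $P$ in $\mathcal G(t)$, $u\in\Sigma$, and $j$ a $P$-losing number. Suppose that for every strict prefix $w\prec u$ the label $t(w)$ is neither $\sim$ nor $p_{j'}$ with $j'<j$. Then $s(\varepsilon,\Sigma{\upharpoonright}u){\upharpoonright}j=s(u,\Sigma){\upharpoonright}j$.
   Context: Fix natural numbers $i<k$. Trees over a ranked alphabet are partial maps $t:\omega^*\to A$ with non-empty prefix-closed domain where a node with an $m$-ary label has exactly the children $u0,\ldots,u(m-1)$; $t{\upharpoonright}u$ is the subtree at $u$, $\preceq$ the prefix order. The alphabet $\tilde A_{i,k}$ has unary letters $p_i,\ldots,p_k$, a unary letter $\sim$, and binary letters $c_1,c_2$. Players $1,2$; $\bar P$ the opponent. Well-formed: no branch has infinitely many $\sim$. A node $u$ is switched if an odd number of strict prefixes $w\prec u$ have $t(w)=\sim$, kept otherwise. The game $\mathcal G(t)$: positions are nodes, moves to children, start at the root; $u$ is controlled by $P$ iff ($u$ kept and $t(u)=c_P$) or ($u$ switched and $t(u)=c_{\bar P}$). An infinite play is won by player 1 iff it is (eventually) kept and the least $j$ with infinitely many nodes labelled $p_j$ is even, or (eventually) switched and this $j$ is odd (take $j=k$ if none occurs infinitely often). A strategy of $P$ is a set $\Sigma\subseteq\mathrm{dom}(t)$ containing the root, prefix-closed, where each $u\in\Sigma$ controlled by $P$ has exactly one child in $\Sigma$ and every other $u\in\Sigma$ has all children in $\Sigma$; winning if every branch all of whose prefixes lie in $\Sigma$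 is won by $P$. For $u\in\Sigma$, $\Sigma{\upharpoonright}u=\{w:uw\in\Sigma\}$; when no strict prefix of $u$ is labelled $\sim$ it is a winning strategy of $P$ in $\mathcal G(t{\upharpoonright}u)$, and $s(\cdot,\Sigma{\upharpoonright}u)$ is computed with respect to $t{\upharpoonright}u$. $P$-losing numbers: $j\in\{i,\ldots,k\}$ odd for $P=1$, even for $P=2$; $i',k'$ least/largest. Tuples $(\theta_{i'},\theta_{i'+2},\ldots,\theta_{k'})$ of countable ordinals are ordered lexicographically (smaller index more significant), suprema in this order; $(\theta_{i'},\ldots,\theta_{k'}){\upharpoonright}j=(\theta_{i'},\ldots,\theta_j)$ for $P$-losing $j$. A node $u\in\Sigma$ is active if $t(u)=p_j$ for a $P$-losing $j$ and no strict prefix $w\prec u$ has $t(w)=\sim$ or $t(w)=p_{j'}$ with $j'<j$; $\mathrm{act}(\Sigma)$ is the set of active nodes. $u\gg w$ iff $u,w\in\Sigma$, $u\prec w$ and some $w'\in\mathrm{act}(\Sigma)$ has $u\preceq w'\preceq w$ (well-founded for winning $\Sigma$). $\mathrm{succ}_u(\Sigma)$ is the set of $\preceq$-minimal elements of $\{w\in\mathrm{act}(\Sigma):u\preceq w\}$. The map $s(\cdot,\Sigma)$ is defined by well-founded recursion along $\gg$: (a) if $u\in\mathrm{act}(\Sigma)$, $t(u)=p_j$ and $s(u0,\Sigma)=(\theta_{i'},\ldots,\theta_{k'})$, then $s(u,\Sigma)=(\theta_{i'},\ldots,\theta_{j-2},\theta_j+1,0,\ldots,0)$; (b) if $u\notin\mathrm{act}(\Sigma)$,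 then $s(u,\Sigma)=\sup_{w\in\mathrm{succ}_u(\Sigma)}s(w,\Sigma)$ (empty supremum $=(0,\ldots,0)$). *)

From mathcomp Require Import all_boot.
Set Implicit Arguments. Unset Strict Implicit. Unset Printing Implicit Defensive.

(* |OZ| = 0, |OS a| = |a|+1, |OL f| = sup_n |f n|.  Every countable ordinal
   is represented; ordinals are compared up to [ord_eq]. *)
Inductive Ord : Type := OZ | OS of Ord | OL of (nat -> Ord).

Fixpoint ord_le (a b : Ord) {struct a} : Prop :=
  match a with
  | OZ => True
  | OS a' =>
      (* |a'| < |b| *)
      (fix lt (b : Ord) : Prop :=
         match b with
         | OZ => False
         | OS b' => ord_le a' b'
         | OL g => exists n, lt (g n)
         end) b
  | OL f => forall n, ord_le (f n) b
  end.

Definition ord_lt (a b : Ord) : Prop := ord_le (OS a) b.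
Definition ord_eq (a b : Ord) : Prop := ord_le a b /\ ord_le b a.

Inductive player := P1 | P2.
Definition opp (P : player) := match P with P1 => P2 | P2 => P1 end.

Inductive label := Lp of nat | Lsim | Lc of player.

Definition arity (a : label) : nat :=
  match a with Lp _ => 1 | Lsim => 1 | Lc _ => 2 end.

Definition node := seq nat.
Definition tree := node -> option label.

Definition in_dom (t : tree) (u : node) : Prop := t u <> None.

Definition is_tree (i k : nat) (t : tree) : Prop :=
  [/\ in_dom t [::],
      (forall u v, prefix u v -> in_dom t v -> in_dom t u),
      (forall u a, t u = Some a -> forall n, in_dom t (rcons u n) <-> n < arity a)
    & (forall u j, t u = Some (Lp j) -> i <= j <= k)].

Definition is_sim (o : option label) : bool :=
  if o is Some Lsim then true else false.
Definition is_c (P : player) (o : option label) : bool :=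
  match o, P with Some (Lc P1), P1 => true | Some (Lc P2), P2 => true | _, _ => false end.

Definition pref (b : nat -> nat) (n : nat) : node := mkseq b n.

Definition is_branch (t : tree) (b : nat -> nat) : Prop :=
  forall n, in_dom t (pref b n).

Definition well_formed (t : tree) : Prop :=
  forall b, is_branch t b ->
    exists N, forall n, N <= n -> t (pref b n) <> Some Lsim.

Definition switched (t : tree) (u : node) : bool :=
  odd (count (fun m => is_sim (t (take m u))) (iota 0 (size u))).

Definition controlled (t : tree) (P : player) (u : node) : bool :=
  (~~ switched t u && is_c P (t u)) || (switched t u && is_c (opp P) (t u)).

Definition inf_p (t : tree) (b : nat -> nat) (j : nat) : Prop :=
  forall N, exists n, N <= n /\ t (pref b n) = Some (Lp j).

(* m is the least j with infinitely many p_j on b (m = k if there is none) *)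
Definition least_inf (k : nat) (t : tree) (b : nat -> nat) (m : nat) : Prop :=
  (inf_p t b m /\ forall j, j < m -> ~ inf_p t b j) \/
  (m = k /\ forall j, ~ inf_p t b j).

Definition won_by_1 (k : nat) (t : tree) (b : nat -> nat) : Prop :=
  ((exists N, forall n, N <= n -> ~~ switched t (pref b n)) /\
     exists m, least_inf k t b m /\ ~~ odd m) \/
  ((exists N, forall n, N <= n -> switched t (pref b n)) /\
     exists m, least_inf k t b m /\ odd m).

Definition won_by (k : nat) (t : tree) (P : player) (b : nat -> nat) : Prop :=
  match P with P1 => won_by_1 k t b | P2 => ~ won_by_1 k t b end.

Definition strat := node -> Prop.

Definition is_strategy (t : tree) (P : player) (S : strat) : Prop :=
  [/\ (forall u, S u -> in_dom t u),
      S [::],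
      (forall u v, prefix u v -> S v -> S u),
      (forall u, S u -> controlled t P u ->
         exists n, S (rcons u n) /\ forall m, S (rcons u m) -> m = n)
    & (forall u, S u -> ~~ controlled t P u ->
         forall n, in_dom t (rcons u n) -> S (rcons u n))].

Definition is_winning_strategy (k : nat) (t : tree) (P : player) (S : strat) : Prop :=
  is_strategy t P S /\
  forall b, (forall n, S (pref b n)) -> won_by k t P b.

Definition subtree (t : tree) (u : node) : tree := fun w => t (u ++ w).
Definition restr (S : strat) (u : node) : strat := fun w => S (u ++ w).

Definition losing (i k : nat) (P : player) (j : nat) : bool :=
  (i <= j <= k) && (if P is P1 then odd j else ~~ odd j).

Definition clean_above (t : tree) (u : node) (j : nat) : Prop :=
  forall m, m < size u ->
    t (take m u) <> Some Lsim /\ forall j', j' < j -> t (take m u) <> Some (Lp j').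

Definition active (i k : nat) (t : tree) (P : player) (S : strat) (u : node) : Prop :=
  S u /\ exists j, t u = Some (Lp j) /\ losing i k P j /\ clean_above t u j.

Definition succ_nodes (i k : nat) (t : tree) (P : player) (S : strat) (u w : node) : Prop :=
  [/\ active i k t P S w, prefix u w &
      forall w', active i k t P S w' -> prefix u w' -> prefix w' w -> w' = w].

(* tuples (theta_{i'}, theta_{i'+2}, ..., theta_{k'}) : only the values at
   P-losing indices matter *)
Definition tup := nat -> Ord.

Definition teq (i k : nat) (P : player) (x y : tup) : Prop :=
  forall j, losing i k P j -> ord_eq (x j) (y j).

Definition teq_upto (i k : nat) (P : player) (j : nat) (x y : tup) : Prop :=
  forall j', losing i k P j' -> j' <= j -> ord_eq (x j') (y j').

Definition lex_lt (i k : nat) (P : player) (x y : tup) : Prop :=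
  exists j, [/\ losing i k P j,
               (forall j', losing i k P j' -> j' < j -> ord_eq (x j') (y j'))
             & ord_lt (x j) (y j)].

Definition lex_le (i k : nat) (P : player) (x y : tup) : Prop :=
  lex_lt i k P x y \/ teq i k P x y.

Definition is_lub (i k : nat) (P : player) (A : tup -> Prop) (x : tup) : Prop :=
  (forall y, A y -> lex_le i k P y x) /\
  (forall z, (forall y, A y -> lex_le i k P y z) -> lex_le i k P x z).

Definition bump (j : nat) (th : tup) : tup :=
  fun j' => if j' < j then th j' else if j' == j then OS (th j) else OZ.

Definition is_rank (i k : nat) (t : tree) (P : player) (S : strat)
    (s : node -> tup) : Prop :=
  forall u, S u ->
    (forall j, active i k t P S u -> t u = Some (Lp j) ->
        teq i k P (s u) (bump j (s (rcons u 0)))) /\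
    (~ active i k t P S u ->
        is_lub i k P (fun x => exists w, succ_nodes i k t P S u w /\ x = s w) (s u)).

From Pilot Require Import Defs.
From mathcomp Require Import all_boot.
From Stdlib Require Import Classical ClassicalEpsilon.

(* By well-founded induction along [>>] in the subtree at [u], one compares
   s'(w) with s(u w).  Since no strict prefix of [u] carries [~] or a
   priority below [j], a node [u w] is active in [t] exactly when [w] is
   active in the subtree, except when its priority exceeds [j]; the resulting
   extra bump or extra pass-through only changes coordinates beyond [j].
   Suprema therefore only need to be compared up to [j], and there they are
   determined by the compared sets up to [j].  Well-foundedness of [>>] comes
   from the winning condition: an infinite chain yields a play consistent
   with the strategy through infinitely many active nodes, whose priorities
   stabilise at a P-losing value, so P loses that play. *)

Set Implicit Arguments. Unset Strict Implicit. Unset Printing Implicit Defensive.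

(** * Brouwer ordinals *)

Lemma ord_le_OL x f n : ord_le x (f n) -> ord_le x (OL f).
Proof.
elim: x => [//|x _|g IH] /= le_x; first by exists n.
by move=> m; apply: IH.
Qed.

Lemma ord_leS_ltW x y :
  (ord_le x y -> ord_le x (OS y)) /\ (ord_lt x y -> ord_le x y).
Proof.
elim: x y => [//|x IH|f IH] y; rewrite /ord_lt.
- split; first exact: (proj2 (IH y)).
  elim: y => [//|y _|g IHg] /=; first exact: (proj2 (IH y)).
  by case=> n lt_n; exists n; apply: IHg.
- split=> [le_f n|]; first exact: (proj1 (IH n y)).
  elim: y => [//|y _|g IHg] /=; first by move=> le_f n; apply: (proj1 (IH n y)).
  by case=> m lt_m n; apply: (@ord_le_OL _ _ m); apply: IHg.
Qed.

Lemma ord_ltW x y : ord_lt x y -> ord_le x y.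
Proof. exact: (proj2 (ord_leS_ltW x y)). Qed.

Lemma ord_le_refl x : ord_le x x.
Proof.
elim: x => [//|x IH|f IH] /=; first exact: IH.
by move=> n; apply: (@ord_le_OL _ _ n).
Qed.

Lemma ord_le_trans a b c : ord_le a b -> ord_le b c -> ord_le a c.
Proof.
elim: a b c => [//|a IH|f IH] b c; last by move=> le_f le_bc n; apply: IH (le_f n) le_bc.
change (ord_lt a b -> ord_le b c -> ord_lt a c); rewrite /ord_lt.
elim: b c => [//|b _|g IHg] c /=; last first.
  by case=> n lt_n le_g; apply: (IHg n); [exact: lt_n | exact: (le_g n)].
move=> le_ab; elim: c => [//|c _|h IHh] /=; first exact: IH.
by case=> n lt_n; exists n; apply: IHh.
Qed.

Lemma ord_lt_le_trans a b c : ord_lt a b -> ord_le b c -> ord_lt a c.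
Proof. exact: ord_le_trans. Qed.

Lemma ord_le_lt_trans a b c : ord_le a b -> ord_lt b c -> ord_lt a c.
Proof. exact: (@ord_le_trans (OS a) (OS b)). Qed.

Lemma ord_lt_irrefl a : ~ ord_lt a a.
Proof.
elim: a => [//|a IH|f IH]; first exact: IH.
case=> n lt_n; apply: (IH n); apply: (@ord_le_trans _ (OS (OL f))); last exact: lt_n.
exact: (@ord_le_OL _ _ n (ord_le_refl _)).
Qed.

Lemma ord_lt_geF a b : ord_lt a b -> ord_le b a -> False.
Proof. by move=> lt_ab le_ba; apply: (ord_lt_irrefl (ord_lt_le_trans lt_ab le_ba)). Qed.

Lemma ord_le_or_lt a b : ord_le a b \/ ord_lt b a.
Proof.
elim: a b => [|a IH|f IH] b; first by left.
- elim: b => [|b _|g IHg]; first by right.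
    by case: (IH b) => H; [left|right].
  case: (classic (exists n, ord_le (OS a) (g n))) => [[n le_n]|no_n].
    by left; apply: (@ord_le_OL _ _ n).
  right => /= n; case: (IHg n) => // le_n; case: no_n; exists n; exact: le_n.
- case: (classic (exists n, ord_lt b (f n))) => [[n lt_n]|no_n]; first by right; exists n.
  left => n; case: (IH n b) => // lt_n; case: no_n; by exists n.
Qed.

Lemma ord_eq_refl a : ord_eq a a.
Proof. by split; apply: ord_le_refl. Qed.

Lemma ord_eq_sym a b : ord_eq a b -> ord_eq b a.
Proof. by case. Qed.

Lemma ord_eq_trans a b c : ord_eq a b -> ord_eq b c -> ord_eq a c.
Proof. by case=> ? ? [? ?]; split; apply: ord_le_trans; eassumption. Qed.

(** * Lexicographic comparison of restricted tuples *)

Section TruncatedLex.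
Variables (i k : nat) (P : player).

Definition agree_below (n : nat) (x y : tup) : Prop :=
  forall j', losing i k P j' -> j' < n -> ord_eq (x j') (y j').

Definition lex_ltj (j : nat) (x y : tup) : Prop :=
  exists2 j0, j0 <= j &
    [/\ losing i k P j0, agree_below j0 x y & ord_lt (x j0) (y j0)].

Definition lex_lej (j : nat) (x y : tup) : Prop :=
  lex_ltj j x y \/ teq_upto i k P j x y.

Lemma teq_upto_sym j x y : teq_upto i k P j x y -> teq_upto i k P j y x.
Proof. by move=> eq_xy j' l le_j'; apply/ord_eq_sym/eq_xy. Qed.

Lemma teq_upto_trans j x y z :
  teq_upto i k P j x y -> teq_upto i k P j y z -> teq_upto i k P j x z.
Proof.
by move=> eq_xy eq_yz j' l le_j'; apply: ord_eq_trans (eq_xy _ l le_j') (eq_yz _ l le_j').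
Qed.

Lemma teq_teq_upto j x y : teq i k P x y -> teq_upto i k P j x y.
Proof. by move=> eq_xy j' l _; apply: eq_xy. Qed.

Lemma bump_teq_upto j m x y :
  teq_upto i k P j x y -> teq_upto i k P j (Defs.bump m x) (Defs.bump m y).
Proof.
move=> eq_xy j' l le_j'; rewrite /Defs.bump; case: ltnP => _; first exact: eq_xy.
case: eqP => [eq_j'm|_]; last exact: ord_eq_refl.
by subst j'; case: (eq_xy m l le_j').
Qed.

Lemma bump_below j m x : j < m -> teq_upto i k P j (Defs.bump m x) x.
Proof.
by move=> lt_jm j' _ le_j'; rewrite /Defs.bump (leq_ltn_trans le_j' lt_jm); apply: ord_eq_refl.
Qed.

Lemma teq_upto_lej j x y : teq_upto i k P j x y -> lex_lej j x y.
Proof. by right. Qed.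

Lemma lex_le_lej j x y : lex_le i k P x y -> lex_lej j x y.
Proof.
case=> [[j0 [l0 ag0 lt0]]|eq_xy]; last by right; apply: teq_teq_upto.
case: (leqP j0 j) => [le_j0|lt_j]; first by left; exists j0.
by right=> j' l le_j'; apply: ag0 => //; apply: leq_ltn_trans lt_j.
Qed.

Lemma lex_lej_le j0 j x y : j0 <= j -> lex_lej j x y -> lex_lej j0 x y.
Proof.
move=> le_j0 [[j1 le_j1 [l1 ag1 lt1]]|eq_xy]; last first.
  by right=> j' l le_j'; apply: eq_xy l (leq_trans le_j' le_j0).
case: (leqP j1 j0) => [le_j10|lt_j01]; first by left; exists j1.
by right=> j' l le_j'; apply: ag1 => //; apply: leq_ltn_trans lt_j01.
Qed.

Lemma lex_lej_trans j x y z : lex_lej j x y -> lex_lej j y z -> lex_lej j x z.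
Proof.
case=> [[a le_a [la ag_a lt_a]]|eq_xy]; case=> [[b le_b [lb ag_b lt_b]]|eq_yz].
- left; case: (ltngtP a b) => [ab|ba|eq_ab].
  + exists a => //; split=> // [j' l j'a|].
      by apply: ord_eq_trans (ag_a _ l j'a) (ag_b _ l (ltn_trans j'a ab)).
    exact: ord_lt_le_trans lt_a (proj1 (ag_b _ la ab)).
  + exists b => //; split=> // [j' l j'b|].
      by apply: ord_eq_trans (ag_a _ l (ltn_trans j'b ba)) (ag_b _ l j'b).
    exact: ord_le_lt_trans (proj1 (ag_a _ lb ba)) lt_b.
  + subst b; exists a => //; split=> // [j' l j'a|].
      by apply: ord_eq_trans (ag_a _ l j'a) (ag_b _ l j'a).
    exact: ord_lt_le_trans lt_a (ord_ltW lt_b).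
- left; exists a => //; split=> // [j' l j'a|].
    by apply: ord_eq_trans (ag_a _ l j'a) (eq_yz _ l (leq_trans (ltnW j'a) le_a)).
  exact: ord_lt_le_trans lt_a (proj1 (eq_yz _ la le_a)).
- left; exists b => //; split=> // [j' l j'b|].
    by apply: ord_eq_trans (eq_xy _ l (leq_trans (ltnW j'b) le_b)) (ag_b _ l j'b).
  exact: ord_le_lt_trans (proj1 (eq_xy _ lb le_b)) lt_b.
- by right; apply: teq_upto_trans eq_xy eq_yz.
Qed.

Lemma lex_lej_antisym j x y :
  lex_lej j x y -> lex_lej j y x -> teq_upto i k P j x y.
Proof.
case=> [[a le_a [la ag_a lt_a]]|//]; case=> [[b le_b [lb ag_b lt_b]]|eq_yx].
  case: (ltngtP a b) => [ab|ba|eq_ab].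
  - by case: (ord_lt_geF lt_a (proj1 (ag_b _ la ab))).
  - by case: (ord_lt_geF lt_b (proj1 (ag_a _ lb ba))).
  - by subst b; case: (ord_lt_geF lt_a (ord_ltW lt_b)).
by case: (ord_lt_geF lt_a (proj1 (eq_yx _ la le_a))).
Qed.

Lemma agree_below_or_diff n x y :
  agree_below n x y \/
  exists2 j0, j0 < n & [/\ losing i k P j0, agree_below j0 x y & ~ ord_eq (x j0) (y j0)].
Proof.
elim: n => [|n [ag_n|[j0 lt_j0 diff]]]; first by left.
- case: (boolP (losing i k P n)) => ln; last first.
    left=> j' l; rewrite ltnS leq_eqVlt => /orP [/eqP eq_j'|]; last exact: ag_n.
    by move: l; rewrite eq_j' (negbTE ln).
  case: (classic (ord_eq (x n) (y n))) => [eq_n|neq_n]; last by right; exists n.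
  by left=> j' l; rewrite ltnS leq_eqVlt => /orP [/eqP ->|]; last exact: ag_n.
- by right; exists j0 => //; apply: ltnW.
Qed.

Lemma lex_lej_total j x y : lex_lej j x y \/ lex_ltj j y x.
Proof.
case: (agree_below_or_diff j.+1 x y) => [ag|[j0 lt_j0 [l0 ag0 neq0]]].
  by left; right=> j' l le_j'; apply: ag.
have ag0' : agree_below j0 y x by move=> j' l lt_j'; apply/ord_eq_sym/ag0.
case: (ord_le_or_lt (x j0) (y j0)) => [le_xy|lt_yx]; last by right; exists j0.
case: (ord_le_or_lt (y j0) (x j0)) => [le_yx|lt_xy]; first by case: neq0.
by left; left; exists j0.
Qed.

Lemma lex_le_antisym x y : lex_le i k P x y -> lex_le i k P y x -> teq i k P x y.
Proof.
move=> le_xy le_yx j l; apply: (lex_lej_antisym (lex_le_lej k le_xy) (lex_le_lej k le_yx)) => //.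
by case/andP: l => /andP [].
Qed.

Lemma lex_lt_geF x y : lex_lt i k P x y -> lex_le i k P y x -> False.
Proof.
case=> a [la ag_a lt_a] le_yx.
have lt_xy : lex_lej a x y by left; exists a.
have [_] := lex_lej_antisym lt_xy (lex_le_lej a le_yx) la (leqnn a).
exact: ord_lt_geF lt_a.
Qed.

Lemma lex_le_of_lej_above j x y : lex_lej j x y ->
  (forall j', losing i k P j' -> j < j' -> ord_lt (x j') (y j')) -> lex_le i k P x y.
Proof.
case=> [[j0 le_j0 [l0 ag0 lt0]] _|eq_xy above]; first by left; exists j0.
case: (classic (exists m, losing i k P m && (j < m))) => [ex_m|no_m].
  case: (ex_minnP ex_m) => m /andP [lm jm] min_m.
  left; exists m; split=> // [j' l j'm|]; last exact: above.
  apply: eq_xy => //; rewrite leqNgt; apply/negP => jj'.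
  by have := min_m j' (introT andP (conj l jj')); rewrite leqNgt j'm.
right=> j' l; apply: eq_xy => //; rewrite leqNgt; apply/negP => jj'.
by apply: no_m; exists j'; rewrite l.
Qed.

Definition sup_at (T : countType) (g : T -> tup) (j' : nat) : Ord :=
  OL (fun n => if unpickle n is Some y then g y j' else OZ).

Lemma sup_at_ge (T : countType) (g : T -> tup) y j' : ord_le (g y j') (sup_at g j').
Proof. by apply: (@ord_le_OL _ _ (pickle y)); rewrite pickleK; apply: ord_le_refl. Qed.

(* Were [Z <_j L], the tuple agreeing with [Z] up to the first difference and
   exceeding every element of [A] beyond it would be an upper bound of [A]
   strictly below [L]. *)
Lemma is_lub_lej (T : countType) (g : T -> tup) j (A : tup -> Prop) L Z :
  (forall x, A x -> exists y, x = g y) -> is_lub i k P A L ->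
  (forall a, A a -> lex_lej j a Z) -> lex_lej j L Z.
Proof.
move=> A_g [_ least_L] A_Z.
case: (lex_lej_total j L Z) => // [[j0 le_j0 [l0 ag0 lt0]]].
pose W j' := if j' < j0 then L j' else if j' == j0 then Z j0 else OS (sup_at g j').
have Z_W : teq_upto i k P j0 Z W.
  move=> j' l; rewrite leq_eqVlt /W => /orP [/eqP ->|j'j0].
    by rewrite ltnn eqxx; apply: ord_eq_refl.
  by rewrite j'j0; apply: ag0.
have ub_W : forall a, A a -> lex_le i k P a W.
  move=> a Aa; apply: (@lex_le_of_lej_above j0).
    exact: lex_lej_trans (lex_lej_le le_j0 (A_Z a Aa)) (teq_upto_lej Z_W).
  move=> j' _ j0j'; have [y ->] := A_g a Aa.
  by rewrite /W ltnNge (ltnW j0j') gtn_eqF //; apply: sup_at_ge.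
exfalso; apply: (@lex_lt_geF W L); last exact: least_L W ub_W.
exists j0; split=> // [j' _ j'j0|].
  by rewrite /W j'j0; apply: ord_eq_refl.
by rewrite /W ltnn eqxx.
Qed.

Lemma is_lub_teq_upto (T : countType) (g h : T -> tup) j
    (A B : tup -> Prop) L M :
  (forall x, A x -> exists y, x = g y) -> (forall x, B x -> exists y, x = h y) ->
  is_lub i k P A L -> is_lub i k P B M ->
  (forall a, A a -> lex_lej j a M) -> (forall b, B b -> lex_lej j b L) ->
  teq_upto i k P j L M.
Proof.
move=> A_g B_h lub_L lub_M A_M B_L.
by apply: lex_lej_antisym; [apply: is_lub_lej A_g lub_L A_M | apply: is_lub_lej B_h lub_M B_L].
Qed.

Lemma is_lub_unique (A : tup -> Prop) L M :
  is_lub i k P A L -> is_lub i k P A M -> teq i k P L M.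
Proof.
by move=> [ub_L least_L] [ub_M least_M]; apply: lex_le_antisym; [apply: least_L | apply: least_M].
Qed.

Lemma is_lub_ext (A B : tup -> Prop) L :
  (forall x, B x <-> A x) -> is_lub i k P A L -> is_lub i k P B L.
Proof.
move=> BA [ub_L least_L]; split=> [y /BA|z ub_z]; first exact: ub_L.
by apply: least_L => y /BA; apply: ub_z.
Qed.

End TruncatedLex.

Lemma prefix_takeE (a b : node) : prefix a b -> take (size a) b = a.
Proof. by rewrite prefixE => /eqP. Qed.

Lemma prefix_size_eq (a b : node) : prefix a b -> size b <= size a -> a = b.
Proof. by move=> ab le_ba; rewrite -(prefix_takeE ab) take_oversize. Qed.

Lemma prefix_total (a b c : node) : prefix a c -> prefix b c -> prefix a b \/ prefix b a.
Proof.
move=> /prefix_takeE ac /prefix_takeE bc.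
case: (leqP (size a) (size b)) => [ab|/ltnW ba]; [left|right]; rewrite prefixE.
- by rewrite -bc take_takel // ac.
- by rewrite -ac take_takel // bc.
Qed.

Lemma prefix_cat2 (u a b : node) : prefix (u ++ a) (u ++ b) = prefix a b.
Proof. by rewrite prefix_catr // eqxx. Qed.

Lemma prefix_cat_drop (u y : node) : prefix u y -> y = u ++ drop (size u) y.
Proof. by move=> uy; rewrite -{1}(prefix_takeE uy) cat_take_drop. Qed.

Lemma prefix_cat_ex (u w y : node) : prefix (u ++ w) y -> exists2 y', y = u ++ y' & prefix w y'.
Proof.
move=> uwy; have eq_y := prefix_cat_drop (catl_prefix uwy).
by exists (drop (size u) y) => //; rewrite -(prefix_cat2 u) -eq_y.
Qed.

Lemma take_pref (b : nat -> nat) n N : n <= N -> take n (pref b N) = pref b n.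
Proof. by move=> le_nN; rewrite /pref /mkseq -map_take take_iota (minn_idPl le_nN). Qed.

(** * Active nodes and their successors *)

Definition prio (t : tree) (v : node) : nat := if t v is Some (Lp m) then m else 0.

Section ActiveNodes.
Variables (i k : nat) (t : tree) (P : player) (S : strat).
Local Notation active := (Defs.active i k t P S).
Local Notation succ_nodes := (Defs.succ_nodes i k t P S).

Lemma activeP v : active v ->
  [/\ S v, t v = Some (Lp (prio t v)), losing i k P (prio t v) & clean_above t v (prio t v)].
Proof. by case=> Sv [m [tv [lm clean_v]]]; rewrite /prio tv. Qed.

Lemma active_prio_le y y' : active y -> active y' -> prefix y y' -> prio t y' <= prio t y.
Proof.
move=> /activeP [_ ty _ _] /activeP [_ _ _ clean_y'] yy'.
case: (ltnP (size y) (size y')) => [lt_yy'|]; last by move/(prefix_size_eq yy') <-.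
rewrite leqNgt; apply/negP => lt_prio.
by apply: (proj2 (clean_y' _ lt_yy') _ lt_prio); rewrite (prefix_takeE yy').
Qed.

Lemma succ_nodes_self v y : active v -> (succ_nodes v y <-> y = v).
Proof.
move=> act_v; split=> [[_ vy min_y]|->]; first exact/esym/(min_y v act_v (prefix_refl v) vy).
split=> // [|w' _ vw' w'v]; first exact: prefix_refl.
by apply/esym/prefix_size_eq => //; apply: size_prefix.
Qed.

Lemma succ_nodes_exists w y : active y -> prefix w y ->
  exists2 x, succ_nodes w x & prefix x y.
Proof.
move: {2}(size y) (leqnn (size y)) => n; elim: n y => [|n IH] y le_yn act_y wy.
  exists y; last exact: prefix_refl.
  split=> // w' _ _ w'y; apply: prefix_size_eq w'y _.
  by rewrite (leq_trans le_yn).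
case: (classic (exists y0, [/\ active y0, prefix w y0, prefix y0 y & y0 <> y])).
  case=> y0 [act_y0 wy0 y0y neq_y0y].
  have lt_y0y : size y0 < size y.
    by rewrite ltnNge; apply/negP => /(prefix_size_eq y0y).
  have [x succ_x xy0] := IH y0 (leq_trans lt_y0y le_yn) act_y0 wy0.
  by exists x; last exact: prefix_trans xy0 y0y.
move=> no_y0; exists y; last exact: prefix_refl.
split=> // w' act_w' ww' w'y; apply: NNPP => neq_w'y; apply: no_y0; by exists w'.
Qed.

End ActiveNodes.

Section TreeFacts.
Variables (i k : nat) (t : tree) (P : player) (S : strat).
Hypotheses (t_tree : is_tree i k t) (S_strat : is_strategy t P S).
Local Notation active := (Defs.active i k t P S).
Local Notation succ_nodes := (Defs.succ_nodes i k t P S).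

Lemma p_node_child0 v m : S v -> t v = Some (Lp m) -> S (rcons v 0).
Proof.
case: t_tree S_strat => _ _ t_ar _ [_ _ _ _ S_all] Sv tv.
apply: S_all => //; last exact/(t_ar _ _ tv).
by rewrite /controlled tv; case: P; rewrite /= !andbF.
Qed.

Lemma p_node_extension v y m : t v = Some (Lp m) -> in_dom t y ->
  prefix v y -> y <> v -> prefix (rcons v 0) y.
Proof.
case: t_tree => _ t_pref t_ar _ tv dom_y vy neq_yv.
case: (leqP (size y) (size v)) => [yv|lt_vy]; first by case: neq_yv; rewrite (prefix_size_eq vy yv).
have v_y : prefix (rcons v (nth 0 y (size v))) y.
  by rewrite -{1}(prefix_takeE vy) -take_nth // prefix_take.
have := t_ar _ _ tv (nth 0 y (size v)); rewrite ltnS leqn0 => -[/(_ (t_pref _ _ v_y dom_y))].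
by move=> /eqP eq0; rewrite eq0 in v_y.
Qed.

Lemma succ_nodes_pass v y m : ~ active v -> t v = Some (Lp m) ->
  succ_nodes v y <-> succ_nodes (rcons v 0) y.
Proof.
move=> nact_v tv.
have ext w : active w -> prefix v w -> prefix (rcons v 0) w.
  move=> act_w vw; have [Sw _ _ _] := activeP act_w.
  apply: p_node_extension tv _ vw _; first by case: S_strat => dom _ _ _ _; apply: dom.
  by move=> eq_wv; apply: nact_v; rewrite -eq_wv.
split=> -[act_y vy min_y]; split=> //.
- exact: ext.
- by move=> w' act_w' vw' w'y; apply: min_y => //; apply: prefix_trans (prefix_rcons v 0) vw'.
- exact: prefix_trans (prefix_rcons v 0) vy.
- by move=> w' act_w' vw' w'y; apply: min_y => //; apply: ext.
Qed.

Lemma rank_pass_through s v m : is_rank i k t P S s -> S v ->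
  ~ active v -> t v = Some (Lp m) -> teq i k P (s v) (s (rcons v 0)).
Proof.
move=> rank_s Sv nact_v tv.
have [_ lub_v] := rank_s v Sv.
have [_ lub_v0] := rank_s _ (p_node_child0 Sv tv).
have [ub_v least_v] := lub_v nact_v.
case: (classic (active (rcons v 0))) => [act_v0|nact_v0].
  apply: lex_le_antisym; last first.
    apply: ub_v; exists (rcons v 0); split=> //.
    exact/(succ_nodes_pass _ nact_v tv)/succ_nodes_self.
  apply: least_v => x [w [/(succ_nodes_pass _ nact_v tv) /(succ_nodes_self _ act_v0) -> ->]].
  by right=> j' _; apply: ord_eq_refl.
apply: is_lub_unique (lub_v nact_v) (is_lub_ext _ (lub_v0 nact_v0)) => x.
by split=> -[w [succ_w ->]]; exists w; split=> //; apply/(succ_nodes_pass _ nact_v tv).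
Qed.

End TreeFacts.

Lemma clean_above_le t u j j' : j' <= j -> clean_above t u j -> clean_above t u j'.
Proof.
move=> le_j' clean_u m lt_m; have [no_sim no_p] := clean_u m lt_m.
by split=> // j'' lt_j''; apply: no_p (leq_trans lt_j'' le_j').
Qed.

Lemma clean_above_cat t u w j :
  clean_above t u j -> clean_above (subtree t u) w j -> clean_above t (u ++ w) j.
Proof.
move=> clean_u clean_w m; rewrite size_cat take_cat.
case: (ltnP m (size u)) => [lt_mu _|le_um lt_m]; first exact: clean_u.
by apply: clean_w; rewrite ltn_subLR.
Qed.

Section Subtree.
Variables (i k : nat) (t : tree) (P : player) (S : strat) (u : node).
Local Notation active := (Defs.active i k t P S).
Local Notation active' := (Defs.active i k (subtree t u) P (restr S u)).
Local Notation succ_nodes := (Defs.succ_nodes i k t P S).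
Local Notation succ_nodes' := (Defs.succ_nodes i k (subtree t u) P (restr S u)).

Lemma active_subtree w : active (u ++ w) -> active' w.
Proof.
case=> Sw [m [tm [lm clean_uw]]]; split=> //; exists m; split=> //; split=> // p lt_p.
rewrite /subtree; have -> : u ++ take p w = take (size u + p) (u ++ w).
  by rewrite take_cat ltnNge leq_addr addKn.
by apply: clean_uw; rewrite size_cat ltn_add2l.
Qed.

Lemma active_of_subtree j w : clean_above t u j -> active' w ->
  prio t (u ++ w) <= j -> active (u ++ w).
Proof.
move=> clean_u /[dup] act_w /activeP [Sw tw lw clean_w] le_j.
split=> //; exists (prio t (u ++ w)); split=> //; split=> //.
by apply: clean_above_cat (clean_above_le le_j clean_u) clean_w.
Qed.

Lemma succ_nodes_cat_active w x : succ_nodes' w x -> active (u ++ x) ->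
  succ_nodes (u ++ w) (u ++ x).
Proof.
case=> _ wx min_x act_ux; split=> //; first by rewrite prefix_cat2.
move=> y act_y uwy yux; have [y' eq_y wy'] := prefix_cat_ex uwy; subst y.
by rewrite prefix_cat2 in yux; rewrite (min_x _ (active_subtree act_y) wy' yux).
Qed.

Lemma succ_nodes_cat_inactive w x y : succ_nodes' w x -> ~ active (u ++ x) ->
  succ_nodes (u ++ x) y -> succ_nodes (u ++ w) y.
Proof.
case=> _ wx min_x nact_ux [act_y uxy min_y]; split=> //.
  by apply: prefix_trans uxy; rewrite prefix_cat2.
move=> z act_z uwz zy; case: (prefix_total zy uxy) => [zux|uxz]; last exact: min_y z act_z uxz zy.
have [z' eq_z wz'] := prefix_cat_ex uwz; subst z; rewrite prefix_cat2 in zux.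
by case: nact_ux; rewrite -(min_x _ (active_subtree act_z) wz' zux).
Qed.

Lemma succ_nodes_cat w y : succ_nodes (u ++ w) y -> exists2 x, succ_nodes' w x &
  u ++ x = y \/ (~ active (u ++ x) /\ succ_nodes (u ++ x) y).
Proof.
case=> act_y uwy min_y; have [y' eq_y wy'] := prefix_cat_ex uwy; subst y.
have [x succ_x xy'] := succ_nodes_exists (active_subtree act_y) wy'.
have [_ wx _] := succ_x; have uwx : prefix (u ++ w) (u ++ x) by rewrite prefix_cat2.
exists x => //; case: (classic (u ++ x = u ++ y')) => [|neq_xy]; [by left | right].
split=> [act_ux|].
  by apply: neq_xy; apply: min_y act_ux uwx _; rewrite prefix_cat2.
split=> [||z act_z uxz zy]; [done | by rewrite prefix_cat2 | apply: min_y => //].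
exact: prefix_trans uwx uxz.
Qed.

End Subtree.

(** * Well-foundedness of [>>] *)

Lemma not_Acc_descending (T : Type) (R : T -> T -> Prop) w :
  ~ Acc R w -> exists c : nat -> T, forall n, R (c n.+1) (c n).
Proof.
move=> nacc_w.
have step x : exists y, ~ Acc R x -> R y x /\ ~ Acc R y.
  case: (classic (Acc R x)) => [acc_x|nacc_x]; first by exists x.
  apply: NNPP => no_y; apply: nacc_x; constructor => y Ryx; apply: NNPP => nacc_y.
  by apply: no_y; exists y.
have [f f_step] := ClassicalEpsilon.choice _ step.
have nacc_f n : ~ Acc R (iter n f w) by elim: n => // n IH; apply: (proj2 (f_step _ IH)).
by exists (fun n => iter n f w) => n; apply: (proj1 (f_step _ (nacc_f n))).
Qed.

Lemma antitone_eventually_const (f : nat -> nat) :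
  (forall n, f n.+1 <= f n) -> exists n0, forall n, n0 <= n -> f n = f n0.
Proof.
move: {2}(f 0) (leqnn (f 0)) => N; elim: N f => [|N IH] f le_f0 f_dec;
  have f_le n : f n <= f 0 by elim: n => // n IHn; apply: leq_trans (f_dec n) IHn.
  by exists 0 => n _; apply/eqP; rewrite eqn_leq f_le (leq_trans le_f0).
case: (classic (exists n, f n < f 0)) => [[n lt_n]|none]; last first.
  exists 0 => n _; apply/eqP; rewrite eqn_leq f_le leqNgt; apply/negP => lt_n.
  by apply: none; exists n.
have [|m|n1 const] := IH (fun m => f (n + m)); first by rewrite addn0 -ltnS (leq_trans lt_n).
  by rewrite addnS; apply: f_dec.
by exists (n + n1) => m le_m; rewrite -(subnKC le_m) -addnA; apply: const (leq_addr _ _).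
Qed.

Lemma nth_prefix (a c : node) q : prefix a c -> q < size a -> nth 0 c q = nth 0 a q.
Proof. by case/prefixP => r ->; rewrite nth_cat => ->. Qed.

Lemma increasing_chain_branch (V : nat -> node) :
  (forall n, prefix (V n) (V n.+1)) -> (forall n, n <= size (V n)) ->
  exists b, forall n, pref b (size (V n)) = V n.
Proof.
move=> V_step V_size.
have V_mono n m : n <= m -> prefix (V n) (V m).
  move/subnKC <-; elim: (m - n) => [|d IH]; first by rewrite addn0 prefix_refl.
  by rewrite addnS; apply: prefix_trans IH (V_step _).
exists (fun q => nth 0 (V q.+1) q) => n.
apply: (@eq_from_nth _ 0) => [|q]; rewrite size_mkseq // => lt_q; rewrite nth_mkseq //.
rewrite -(nth_prefix (V_mono _ (maxn q.+1 n) (leq_maxl _ _)) (V_size q.+1)).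
exact: nth_prefix (V_mono _ _ (leq_maxr q.+1 n)) lt_q.
Qed.

Lemma branch_lost_by i k t P b M :
  (forall n, t (pref b n) <> Some Lsim) -> inf_p t b M ->
  (forall j', j' < M -> ~ inf_p t b j') -> losing i k P M -> ~ won_by k t P b.
Proof.
move=> no_sim inf_M fin_below l_M.
have unswitched n : ~~ switched t (pref b n).
  rewrite /switched size_mkseq (@eq_in_count _ _ pred0) ?count_pred0 // => m.
  rewrite mem_iota add0n => /andP [_ lt_m] /=; rewrite take_pref ?(ltnW lt_m) //.
  by case: (t (pref b m)) (no_sim m) => // -[].
have least_M m : least_inf k t b m -> m = M.
  case=> [[inf_m min_m]|[_ no_inf]]; last by case: (no_inf M).
  by case: (ltngtP m M) => // [lt|gt]; [case: (fin_below m) | case: (min_m M)].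
have won1 : won_by_1 k t b <-> ~~ odd M.
  split=> [[[_ [m [/least_M ->]]]|[[N sw] _]] //|even_M].
    by case/negP: (unswitched N); apply: sw.
  by left; split; [exists 0 => n _; apply: unswitched | exists M; split=> //; left].
by case: P l_M => /andP [_ par] /=; [move/won1; rewrite par | apply; apply/won1].
Qed.

Lemma no_increasing_active_chain i k t P S u (y : nat -> node) :
  is_winning_strategy k t P S -> clean_above t u 0 ->
  (forall n, active i k (subtree t u) P (restr S u) (y n)) ->
  (forall n, prefix (y n) (y n.+1)) -> (forall n, n <= size (y n)) -> False.
Proof.
move=> [S_strat S_win] clean_u act_y y_step y_size.
pose Y n := u ++ y n.
have Y_size n : n <= size (Y n) by rewrite size_cat (leq_trans (y_size n)) ?leq_addl.
have [b b_Y] : exists b, forall n, pref b (size (Y n)) = Y n.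
  by apply: increasing_chain_branch => // n; rewrite prefix_cat2.
have b_take n p : p <= size (Y n) -> pref b p = take p (Y n).
  by move=> le_p; rewrite -(b_Y n) take_pref.
have [n0 prio_const] : exists n0, forall n, n0 <= n ->
    prio (subtree t u) (y n) = prio (subtree t u) (y n0).
  by apply: antitone_eventually_const => n; apply: active_prio_le (act_y n) (act_y n.+1) (y_step n).
have S_b n : S (pref b n).
  have [S_y _ _ _] := activeP (act_y n); case: S_strat => _ _ S_pref _ _.
  by apply: S_pref S_y; rewrite (b_take n n (Y_size n)) prefix_take.
have no_sim n : t (pref b n) <> Some Lsim.
  have [_ _ _ clean_y] := activeP (act_y n.+1).
  have clean_Y := clean_above_cat clean_u (clean_above_le (leq0n _) clean_y).
  by rewrite (b_take n.+1 n (ltnW (Y_size n.+1))); apply: (proj1 (clean_Y n (Y_size n.+1))).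
have inf_M : inf_p t b (prio (subtree t u) (y n0)).
  move=> N; exists (size (Y (maxn N n0))); split.
    exact: leq_trans (leq_maxl N n0) (Y_size _).
  have [_ tY _ _] := activeP (act_y (maxn N n0)).
  by rewrite b_Y -(prio_const _ (leq_maxr N n0)).
have fin_below j' : j' < prio (subtree t u) (y n0) -> ~ inf_p t b j'.
  move=> lt_j' /(_ (size u)) [p [le_up tp]]; pose q := maxn n0 p.+1.
  have lt_pq : p < size (Y q) by apply: leq_trans (leq_maxr n0 p.+1) (Y_size q).
  have [_ _ _ clean_y] := activeP (act_y q).
  have lt_p : p - size u < size (y q) by rewrite ltn_subLR // -size_cat.
  apply: (proj2 (clean_y _ lt_p) j'); first by rewrite (prio_const q (leq_maxl _ _)).
  by rewrite /subtree -tp (b_take q p (ltnW lt_pq)) take_cat ltnNge le_up.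
have [_ _ l_M _] := activeP (act_y n0).
exact: branch_lost_by no_sim inf_M fin_below l_M (S_win b S_b).
Qed.

(* [dominates x w] is the paper's [w >> x]. *)
Definition dominates i k t P (S : strat) (x w : node) : Prop :=
  [/\ S x, prefix w x, x <> w &
      exists y, active i k t P S y /\ prefix w y /\ prefix y x].

Lemma dominates_wf i k t P S u : is_winning_strategy k t P S -> clean_above t u 0 ->
  well_founded (dominates i k (subtree t u) P (restr S u)).
Proof.
move=> S_win clean_u w; apply: NNPP => nacc_w; have [c c_dom] := not_Acc_descending nacc_w.
have y_ex n : exists z,
    [/\ active i k (subtree t u) P (restr S u) z, prefix (c n) z & prefix z (c n.+1)].
  by have [_ _ _ [z [? [? ?]]]] := c_dom n; exists z.
have [y y_spec] := ClassicalEpsilon.choice _ y_ex.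
have c_size n : n <= size (c n).
  elim: n => // n IH; have [_ cc neq _] := c_dom n; apply: leq_ltn_trans IH _.
  by rewrite ltnNge; apply/negP => le_c; apply/neq/esym/(prefix_size_eq cc).
apply: (no_increasing_active_chain (i := i) (y := y) S_win clean_u) => [n|n|n].
- by case: (y_spec n).
- by case: (y_spec n) => _ _ ycn; case: (y_spec n.+1) => _ cny _; apply: prefix_trans ycn cny.
- by case: (y_spec n) => _ cy _; apply: leq_trans (c_size n) (size_prefix cy).
Qed.

(** * Ranks on a subtree *)

Section RankSubtree.
Variables (i k j : nat) (t : tree) (P : player) (S : strat) (u : node) (s s' : node -> tup).
Hypotheses (t_tree : is_tree i k t) (S_win : is_winning_strategy k t P S)
  (clean_u : clean_above t u j) (rank_s : is_rank i k t P S s)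
  (rank_s' : is_rank i k (subtree t u) P (restr S u) s').
Local Notation active := (Defs.active i k t P S).
Local Notation active' := (Defs.active i k (subtree t u) P (restr S u)).
Local Notation succ_nodes' := (Defs.succ_nodes i k (subtree t u) P (restr S u)).
Local Notation agrees w := (teq_upto i k P j (s' w) (s (u ++ w))).

(* If [u ++ w] is not active in [t], its priority exceeds [j], so both the
   bump and the passage through [u ++ w] are invisible up to [j]. *)
Lemma rank_agree_active w : S (u ++ w) -> active' w -> agrees (rcons w 0) -> agrees w.
Proof.
move=> Sw act_w agree_w0; have [_ tw _ _] := activeP act_w.
set m := prio _ w in tw; have tuw : t (u ++ w) = Some (Lp m) := tw.
have [bump_s' _] := rank_s' Sw; have [bump_s _] := rank_s Sw.
apply: teq_upto_trans (teq_teq_upto (bump_s' m act_w tw)) _.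
rewrite -rcons_cat in agree_w0; case: (classic (active (u ++ w))) => [act_uw|nact_uw].
  apply: teq_upto_trans (bump_teq_upto m agree_w0) _.
  exact/teq_upto_sym/teq_teq_upto/bump_s.
have lt_jm : j < m.
  rewrite ltnNge; apply/negP => le_mj; apply: nact_uw.
  exact: active_of_subtree clean_u act_w le_mj.
apply: teq_upto_trans (bump_below _ lt_jm) _; apply: teq_upto_trans agree_w0 _.
exact/teq_upto_sym/teq_teq_upto/(rank_pass_through t_tree (proj1 S_win) rank_s Sw nact_uw tuw).
Qed.

Lemma rank_agree_inactive w : S (u ++ w) -> ~ active' w ->
  (forall x, succ_nodes' w x -> agrees x) -> agrees w.
Proof.
move=> Sw nact_w agree_succ.
have nact_uw : ~ active (u ++ w) by move/active_subtree.
have lub_s' := proj2 (rank_s' Sw) nact_w; have [ub_s' _] := lub_s'.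
have lub_s := proj2 (rank_s Sw) nact_uw; have [ub_s _] := lub_s.
have S_succ x : succ_nodes' w x -> S (u ++ x) by case=> /activeP [].
have below_uw x : succ_nodes' w x -> lex_le i k P (s (u ++ x)) (s (u ++ w)).
  move=> succ_x; case: (classic (active (u ++ x))) => [act_ux|nact_ux].
    by apply: ub_s; exists (u ++ x); split=> //; apply: succ_nodes_cat_active.
  have [_ least_ux] := proj2 (rank_s (S_succ x succ_x)) nact_ux.
  apply: least_ux => _ [y [succ_y ->]]; apply: ub_s; exists y; split=> //.
  exact: succ_nodes_cat_inactive succ_x nact_ux succ_y.
apply: (is_lub_teq_upto (g := s') (h := s) _ _ lub_s' lub_s).
- by move=> _ [x [_ ->]]; exists x.
- by move=> _ [y [_ ->]]; exists y.
- move=> _ [x [succ_x ->]]; apply: lex_lej_trans (teq_upto_lej (agree_succ x succ_x)) _.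
  exact: lex_le_lej (below_uw x succ_x).
- move=> _ [y [succ_y ->]]; have [x succ_x y_x] := succ_nodes_cat succ_y.
  have le_y : lex_le i k P (s y) (s (u ++ x)).
    case: y_x => [<-|[nact_ux succ_xy]]; first by right=> j' _; apply: ord_eq_refl.
    by have [ub_ux _] := proj2 (rank_s (S_succ x succ_x)) nact_ux; apply: ub_ux; exists y.
  apply: lex_lej_trans (lex_le_lej j le_y) _.
  apply: lex_lej_trans (teq_upto_lej (teq_upto_sym (agree_succ x succ_x))) _.
  by apply: lex_le_lej; apply: ub_s'; exists x.
Qed.

Lemma rank_agree_all w : S (u ++ w) -> agrees w.
Proof.
have wf := dominates_wf i S_win (clean_above_le (leq0n j) clean_u).
elim/(well_founded_ind wf): w => w IH Sw.
case: (classic (active' w)) => [act_w|nact_w]; last first.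
  apply: (rank_agree_inactive Sw nact_w) => x succ_x; have [act_x wx _] := succ_x.
  have [Sx _ _ _] := activeP act_x; apply: (IH x _ Sx); rewrite /dominates; split=> //.
  - by move=> eq_xw; apply: nact_w; rewrite -eq_xw.
  - by exists x; split=> //; split=> //; apply: prefix_refl.
have [_ tw _ _] := activeP act_w.
have Sw0 : S (u ++ rcons w 0).
  by rewrite -rcons_cat; exact: (p_node_child0 t_tree (proj1 S_win) Sw (tw : t (u ++ w) = _)).
apply: (rank_agree_active Sw act_w (IH _ _ Sw0)); rewrite /dominates; split=> //.
- exact: prefix_rcons.
- by move/(congr1 size)/esym; rewrite size_rcons; apply: n_Sn.
- by exists w; split=> //; split; [apply: prefix_refl | apply: prefix_rcons].
Qed.

End RankSubtree.

Theorem mainTheorem11 (i k : nat) (t : tree) (P : player) (S : strat)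
    (u : node) (j : nat) (s s' : node -> tup) :
  i < k ->
  is_tree i k t -> well_formed t ->
  is_winning_strategy k t P S ->
  S u ->
  losing i k P j ->
  clean_above t u j ->
  is_rank i k t P S s ->
  is_rank i k (subtree t u) P (restr S u) s' ->
  teq_upto i k P j (s' [::]) (s u).
Proof.
move=> _ t_tree _ S_win Su _ clean_u rank_s rank_s'.
have := rank_agree_all t_tree S_win clean_u rank_s rank_s' (w := [::]).
by rewrite cats0; apply.
Qed.
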